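(* Let $\alpha: I\to M$ be a unit-speed curve on an oriented surface $M\subset E^3$ with Darboux frame $\{T,V,U\}$ and curvatures $k_g,k_n,\tau_g$. Consider the curve $\gamma$ defined in either of the following two cases: (a) $k_n\equiv0$, $c_4,c_5$ real constants, and $\gamma(s)=\alpha(s)+(c_4-s)T(s)+c_5U(s)$; (b) $k_n$ nowhere zero, $\theta$ an antiderivative of $k_n$, $S$ and $C$ antiderivatives of $\sin\theta$ and $\cos\theta$ respectively, $c_6,c_7$ real constants, $$y_3=c_6\cos\theta+c_7\sin\theta-S\cos\theta+C\sin\theta,\qquad y_1=-\sin\theta\,(S-c_6)-\cos\theta\,(C+c_7),$$ and $\gamma(s)=\alpha(s)+y_1(s)T(s)+y_3(s)U(s)$. In either case assume $\gamma$ is regular. Then $\gamma$ is a general helix if and only if $\alpha$ is a relatively normal-slant helix on $M$.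
   Context: $M$ is an oriented surface in Euclidean 3-space $E^3$ and $\alpha:I\to M$ is a unit-speed curve with arc-length parameter $s$. Its Darboux frame $\{T,V,U\}$ consists of the unit tangent $T=\alpha'$, the unit surface normal $U$ of $M$ along $\alpha$, and $V=U\times T$; it satisfies $T'=k_gV+k_nU$, $V'=-k_gT+\tau_gU$, $U'=-k_nT-\tau_gV$, where $k_g,k_n,\tau_g$ are the geodesic curvature, normal curvature and geodesic torsion. A regular curve is a general helix if its unit tangent makes a constant angle with a fixed direction. $\alpha$ is a relatively normal-slant helix if $\langle V,d\rangle$ is constant for some fixed unit vector $d$. *)

From Stdlib Require Import Reals.
From Coquelicot Require Import Coquelicot.
Open Scope R_scope.

Definition vec : Type := (R * R * R)%type.
Definition vx (v : vec) : R := fst (fst v).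
Definition vy (v : vec) : R := snd (fst v).
Definition vz (v : vec) : R := snd v.
Definition mkv (x y z : R) : vec := (x, y, z).
Definition vzero : vec := mkv 0 0 0.
Definition vadd (u v : vec) : vec := mkv (vx u + vx v) (vy u + vy v) (vz u + vz v).
Definition vscal (c : R) (v : vec) : vec := mkv (c * vx v) (c * vy v) (c * vz v).
Definition dot (u v : vec) : R := vx u * vx v + vy u * vy v + vz u * vz v.
Definition cross (u v : vec) : vec :=
  mkv (vy u * vz v - vz u * vy v) (vz u * vx v - vx u * vz v) (vx u * vy v - vy u * vx v).
Definition vnorm (v : vec) : R := sqrt (dot v v).
Definition angle (u v : vec) : R := acos (dot u v / (vnorm u * vnorm v)).

Definition is_derive_v (f : R -> vec) (s : R) (l : vec) : Prop :=
  is_derive (fun t => vx (f t)) s (vx l) /\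
  is_derive (fun t => vy (f t)) s (vy l) /\
  is_derive (fun t => vz (f t)) s (vz l).
Definition ex_derive_v (f : R -> vec) (s : R) : Prop :=
  ex_derive (fun t => vx (f t)) s /\ ex_derive (fun t => vy (f t)) s /\
  ex_derive (fun t => vz (f t)) s.
Definition Derive_v (f : R -> vec) (s : R) : vec :=
  mkv (Derive (fun t => vx (f t)) s) (Derive (fun t => vy (f t)) s)
      (Derive (fun t => vz (f t)) s).

Definition inI (a b : Rbar) (s : R) : Prop := Rbar_lt a s /\ Rbar_lt s b.

Definition regular (a b : Rbar) (g : R -> vec) : Prop :=
  forall s, inI a b s -> ex_derive_v g s /\ Derive_v g s <> vzero.

Definition unit_tangent (g : R -> vec) (s : R) : vec :=
  vscal (/ vnorm (Derive_v g s)) (Derive_v g s).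

Definition general_helix (a b : Rbar) (g : R -> vec) : Prop :=
  exists d : vec, d <> vzero /\
    exists phi : R, forall s, inI a b s -> angle (unit_tangent g s) d = phi.

Definition rel_normal_slant_helix (a b : Rbar) (V : R -> vec) : Prop :=
  exists d : vec, vnorm d = 1 /\
    exists c : R, forall s, inI a b s -> dot (V s) d = c.

(* Darboux frame data of a unit-speed curve alpha on an oriented surface,
   U being the unit surface normal along alpha *)
Definition darboux_curve (a b : Rbar) (alpha T V U : R -> vec)
    (kg kn tg : R -> R) : Prop :=
  forall s, inI a b s ->
    is_derive_v alpha s (T s) /\
    vnorm (T s) = 1 /\ vnorm (U s) = 1 /\ dot (T s) (U s) = 0 /\
    V s = cross (U s) (T s) /\
    is_derive_v T s (vadd (vscal (kg s) (V s)) (vscal (kn s) (U s))) /\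
    is_derive_v V s (vadd (vscal (- kg s) (T s)) (vscal (tg s) (U s))) /\
    is_derive_v U s (vadd (vscal (- kn s) (T s)) (vscal (- tg s) (V s))) /\
    continuous kg s /\ continuous kn s /\ continuous tg s.

Definition case_a (a b : Rbar) (alpha T U : R -> vec) (kn : R -> R)
    (g : R -> vec) : Prop :=
  (forall s, inI a b s -> kn s = 0) /\
  exists c4 c5 : R, forall s, inI a b s ->
    g s = vadd (alpha s) (vadd (vscal (c4 - s) (T s)) (vscal c5 (U s))).

Definition case_b (a b : Rbar) (alpha T U : R -> vec) (kn : R -> R)
    (g : R -> vec) : Prop :=
  (forall s, inI a b s -> kn s <> 0) /\
  exists (theta S C : R -> R) (c6 c7 : R),
    (forall s, inI a b s ->
       is_derive theta s (kn s) /\ is_derive S s (sin (theta s)) /\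
       is_derive C s (cos (theta s))) /\
    forall s, inI a b s ->
      let y3 := c6 * cos (theta s) + c7 * sin (theta s)
                - S s * cos (theta s) + C s * sin (theta s) in
      let y1 := - sin (theta s) * (S s - c6) - cos (theta s) * (C s + c7) in
      g s = vadd (alpha s) (vadd (vscal y1 (T s)) (vscal y3 (U s))).

(** The offsets [y1], [y3] in both cases solve [y1' = kn y3 - 1], [y3' = - kn y1],
    which is exactly the condition for the [T]- and [U]-components of
    [gamma' = (1 + y1' - kn y3) T + (y1 kg - y3 tg) V + (y1 kn + y3') U] to vanish.
    Hence [gamma' = f V] with [f] continuous and, by regularity, nowhere zero, so [f]
    has constant sign on [I] and the unit tangent of [gamma] is [+V] or [-V] throughout.
    A constant angle between [+-V] and [d] is then the same as a constant [<V, d / |d|>]. *)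

From Stdlib Require Import Reals Lra Psatz Ranalysis5.
From Coquelicot Require Import Coquelicot.
Open Scope R_scope.

Ltac vec_ring :=
  unfold vadd, vscal, vzero, mkv, vx, vy, vz; simpl; f_equal; [f_equal|]; ring.

Lemma dot_comm u v : dot u v = dot v u.
Proof. unfold dot; ring. Qed.

Lemma dot_scall c u v : dot (vscal c u) v = c * dot u v.
Proof. unfold dot, vscal, vx, vy, vz, mkv; simpl; ring. Qed.

Lemma dot_scalr c u v : dot u (vscal c v) = c * dot u v.
Proof. rewrite dot_comm, dot_scall, dot_comm; reflexivity. Qed.

Lemma vscal_scal c e v : vscal c (vscal e v) = vscal (c * e) v.
Proof. vec_ring. Qed.

Lemma dot_self_ge0 v : 0 <= dot v v.
Proof. unfold dot; nra. Qed.

Lemma vnorm_zero : vnorm vzero = 0.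
Proof.
  unfold vnorm, dot, vzero, mkv, vx, vy, vz; simpl.
  replace (0 * 0 + 0 * 0 + 0 * 0) with 0 by ring. apply sqrt_0.
Qed.

Lemma vnorm_sqr v : vnorm v * vnorm v = dot v v.
Proof. apply sqrt_sqrt, dot_self_ge0. Qed.

Lemma vnorm_gt0 v : v <> vzero -> 0 < vnorm v.
Proof.
  intros Hv. apply sqrt_lt_R0. destruct v as [[x y] z].
  unfold dot, vx, vy, vz; simpl.
  destruct (Req_dec x 0), (Req_dec y 0), (Req_dec z 0); subst; try nra.
  exfalso; apply Hv; reflexivity.
Qed.

Lemma vnorm_scal c v : vnorm (vscal c v) = Rabs c * vnorm v.
Proof.
  unfold vnorm. rewrite dot_scall, dot_scalr, <- Rmult_assoc, sqrt_mult.
  - f_equal. apply sqrt_Rsqr_abs.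
  - apply Rle_0_sqr.
  - apply dot_self_ge0.
Qed.

Lemma dot_cross_cross u v :
  dot (cross u v) (cross u v) = dot u u * dot v v - dot u v ^ 2.
Proof. unfold dot, cross, vx, vy, vz, mkv; simpl; ring. Qed.

Lemma Rabs_dot_le u v : Rabs (dot u v) <= vnorm u * vnorm v.
Proof.
  unfold vnorm. rewrite <- sqrt_mult by apply dot_self_ge0.
  rewrite <- sqrt_Rsqr_abs. apply sqrt_le_1_alt.
  pose proof (dot_cross_cross u v). pose proof (dot_self_ge0 (cross u v)).
  unfold Rsqr; nra.
Qed.

Lemma vnorm_cross_orthonormal u v :
  vnorm u = 1 -> vnorm v = 1 -> dot u v = 0 -> vnorm (cross u v) = 1.
Proof.
  intros Hu Hv Huv. unfold vnorm. rewrite dot_cross_cross, <- !vnorm_sqr, Hu, Hv, Huv.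
  replace (1 * 1 * (1 * 1) - 0 ^ 2) with 1 by ring. apply sqrt_1.
Qed.

Lemma angle_scal_unit c v d :
  Rabs c = 1 -> vnorm v = 1 -> angle (vscal c v) d = acos (c * dot v d / vnorm d).
Proof.
  intros Hc Hv. unfold angle. rewrite dot_scall, vnorm_scal, Hc, Hv, !Rmult_1_l.
  reflexivity.
Qed.

Lemma Rabs_eq_1_sqr c : Rabs c = 1 -> c * c = 1.
Proof. intros Hc. change (c * c) with (Rsqr c). rewrite Rsqr_abs, Hc. apply Rsqr_1. Qed.

Lemma Rabs_sign x : x <> 0 -> Rabs (sign x) = 1.
Proof.
  intros Hx. destruct (Rdichotomy _ _ Hx).
  - rewrite sign_eq_m1, Rabs_left by lra. lra.
  - rewrite sign_eq_1, Rabs_R1 by lra. reflexivity.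
Qed.

Lemma div_Rabs_sign x : x <> 0 -> / Rabs x * x = sign x.
Proof.
  intros Hx. destruct (Rdichotomy _ _ Hx).
  - rewrite sign_eq_m1, Rabs_left by assumption. field; lra.
  - rewrite sign_eq_1, Rabs_right by lra. field; lra.
Qed.

Lemma unit_tangent_scal_unit g s f v :
  vnorm v = 1 -> f <> 0 -> Derive_v g s = vscal f v ->
  unit_tangent g s = vscal (sign f) v.
Proof.
  intros Hv Hf Hg. unfold unit_tangent.
  rewrite Hg, vnorm_scal, Hv, Rmult_1_r, vscal_scal, div_Rabs_sign by assumption.
  reflexivity.
Qed.

Lemma general_helix_iff_rel_normal_slant_helix_of_unit_tangent a b g V c :
  Rabs c = 1 ->
  (forall s, inI a b s -> vnorm (V s) = 1 /\ unit_tangent g s = vscal c (V s)) ->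
  general_helix a b g <-> rel_normal_slant_helix a b V.
Proof.
  intros Hc HgV.
  assert (Hangle : forall s d, inI a b s ->
            angle (unit_tangent g s) d = acos (c * dot (V s) d / vnorm d)).
  { intros s d Hs. destruct (HgV s Hs) as [HV ->]. now apply angle_scal_unit. }
  pose proof (Rabs_eq_1_sqr c Hc) as Hcc.
  split.
  - intros [d [Hd [phi Hphi]]].
    pose proof (vnorm_gt0 d Hd) as Hnd.
    exists (vscal (/ vnorm d) d). split.
    { rewrite vnorm_scal, Rabs_right by (left; apply Rinv_0_lt_compat, Hnd).
      field; lra. }
    exists (c * cos phi). intros s Hs.
    assert (Hbound : Rabs (c * dot (V s) d / vnorm d) <= 1).
    { unfold Rdiv. rewrite !Rabs_mult, Hc, Rabs_inv, (Rabs_right (vnorm d)) by lra.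
      pose proof (Rabs_dot_le (V s) d) as Hcs. rewrite (proj1 (HgV s Hs)) in Hcs.
      apply Rmult_le_reg_r with (vnorm d); [lra|].
      field_simplify; lra. }
    apply Rabs_le_between in Hbound.
    rewrite <- (Hphi s Hs), Hangle, cos_acos by assumption.
    rewrite dot_scalr.
    replace (c * (c * dot (V s) d / vnorm d)) with (c * c * (dot (V s) d / vnorm d))
      by (field; lra).
    rewrite Hcc. field. lra.
  - intros [d [Hd [k Hk]]].
    exists d. split.
    { intros ->. rewrite vnorm_zero in Hd. lra. }
    exists (acos (c * k)). intros s Hs.
    rewrite Hangle, Hk, Hd by assumption. f_equal. field.
Qed.

Lemma inI_nonempty a b : Rbar_lt a b -> exists s, inI a b s.
Proof.
  unfold inI. destruct a as [x| |], b as [y| |]; simpl; intros Hab; try contradiction.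
  - exists ((x + y) / 2). simpl. lra.
  - exists (x + 1). simpl. lra.
  - exists (y - 1). simpl. lra.
  - exists 0. simpl. tauto.
Qed.

Lemma inI_between a b s1 s2 s :
  inI a b s1 -> inI a b s2 -> s1 <= s <= s2 -> inI a b s.
Proof.
  intros [Ha1 Hb1] [Ha2 Hb2] Hs. split.
  - apply Rbar_lt_le_trans with s1; [assumption | simpl; lra].
  - apply Rbar_le_lt_trans with s2; [simpl; lra | assumption].
Qed.

Lemma inI_locally a b s : inI a b s -> locally s (inI a b).
Proof.
  intros [Ha Hb]. destruct (Rbar_lt_locally a b s Ha Hb) as [delta Hdelta].
  exists delta. intros t Ht. apply Hdelta, Ht.
Qed.

Lemma nonzero_neg_preserved a b (f : R -> R) s1 s2 :
  (forall s, inI a b s -> continuous f s /\ f s <> 0) ->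
  inI a b s1 -> inI a b s2 -> s1 < s2 -> f s1 < 0 -> f s2 < 0.
Proof.
  intros Hf H1 H2 Hlt Hf1.
  destruct (Rdichotomy _ _ (proj2 (Hf s2 H2))) as [|Hf2]; [assumption|].
  exfalso. destruct (IVT_interv f s1 s2) as [z [Hz Hfz]]; try assumption.
  - intros z Hz. apply continuity_pt_filterlim, Hf, (inI_between a b s1 s2); assumption.
  - exact (proj2 (Hf z (inI_between a b s1 s2 z H1 H2 Hz)) Hfz).
Qed.

Lemma nonzero_sign_const a b (f : R -> R) s1 s2 :
  (forall s, inI a b s -> continuous f s /\ f s <> 0) ->
  inI a b s1 -> inI a b s2 -> sign (f s1) = sign (f s2).
Proof.
  intros Hf.
  assert (Hlt : forall s1 s2, inI a b s1 -> inI a b s2 -> s1 < s2 ->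
                  sign (f s1) = sign (f s2)).
  { clear s1 s2. intros s1 s2 H1 H2 Hlt.
    destruct (Rdichotomy _ _ (proj2 (Hf s1 H1))) as [Hneg|Hpos].
    - rewrite !sign_eq_m1; [reflexivity | | assumption].
      apply (nonzero_neg_preserved a b f s1); assumption.
    - assert (Hneg : - f s2 < 0).
      { apply (nonzero_neg_preserved a b (fun t => - f t) s1); try assumption; try lra.
        intros s Hs. destruct (Hf s Hs) as [Hc Hn]. split.
        + apply (continuous_opp f s Hc).
        + lra. }
      rewrite !sign_eq_1; [reflexivity | lra | assumption]. }
  intros H1 H2. destruct (Rtotal_order s1 s2) as [|[->|]].
  - apply Hlt; assumption.
  - reflexivity.
  - symmetry. apply Hlt; assumption.
Qed.

Lemma is_derive_v_ext_loc (f g : R -> vec) s l :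
  locally s (fun t => f t = g t) -> is_derive_v f s l -> is_derive_v g s l.
Proof.
  intros Hfg (H1 & H2 & H3).
  split; [|split]; (eapply is_derive_ext_loc; [|eassumption]);
    apply (filter_imp _ _ (fun t Ht => f_equal _ Ht) Hfg).
Qed.

Lemma is_derive_v_Derive_v f s l : is_derive_v f s l -> Derive_v f s = l.
Proof.
  intros (H1 & H2 & H3). destruct l as [[x y] z].
  unfold Derive_v, mkv. f_equal; [f_equal|]; apply is_derive_unique; assumption.
Qed.

Lemma is_derive_v_plus f g s df dg :
  is_derive_v f s df -> is_derive_v g s dg ->
  is_derive_v (fun t => vadd (f t) (g t)) s (vadd df dg).
Proof.
  intros (F1 & F2 & F3) (G1 & G2 & G3).
  split; [|split].
  - exact (is_derive_plus _ _ _ _ _ F1 G1).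
  - exact (is_derive_plus _ _ _ _ _ F2 G2).
  - exact (is_derive_plus _ _ _ _ _ F3 G3).
Qed.

Lemma is_derive_v_scal (c : R -> R) (v : R -> vec) s dc dv :
  is_derive c s dc -> is_derive_v v s dv ->
  is_derive_v (fun t => vscal (c t) (v t)) s (vadd (vscal dc (v s)) (vscal (c s) dv)).
Proof.
  intros Hc (V1 & V2 & V3).
  split; [|split].
  - exact (is_derive_mult _ _ _ _ _ Hc V1 Rmult_comm).
  - exact (is_derive_mult _ _ _ _ _ Hc V2 Rmult_comm).
  - exact (is_derive_mult _ _ _ _ _ Hc V3 Rmult_comm).
Qed.

Lemma is_derive_v_frame_offset a b alpha T V U kg kn tg y1 y3 s dy1 dy3 :
  darboux_curve a b alpha T V U kg kn tg -> inI a b s ->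
  is_derive y1 s dy1 -> is_derive y3 s dy3 ->
  is_derive_v (fun t => vadd (alpha t) (vadd (vscal (y1 t) (T t)) (vscal (y3 t) (U t)))) s
    (vadd (vscal (1 + dy1 - kn s * y3 s) (T s))
       (vadd (vscal (y1 s * kg s - y3 s * tg s) (V s)) (vscal (y1 s * kn s + dy3) (U s)))).
Proof.
  intros HD Hs H1 H3. destruct (HD s Hs) as (Ha & _ & _ & _ & _ & HT & _ & HU & _).
  pose proof (is_derive_v_plus _ _ _ _ _ Ha
    (is_derive_v_plus _ _ _ _ _ (is_derive_v_scal _ _ _ _ _ H1 HT)
                                (is_derive_v_scal _ _ _ _ _ H3 HU))) as H.
  match goal with
  | |- is_derive_v _ _ ?l => match type of H with
                            | is_derive_v _ _ ?l' => replace l with l' by vec_ring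
                            end
  end.
  exact H.
Qed.

Definition offset_ode (a b : Rbar) (kn y1 y3 : R -> R) : Prop :=
  forall s, inI a b s ->
    is_derive y1 s (kn s * y3 s - 1) /\ is_derive y3 s (- (kn s * y1 s)).

Lemma Derive_v_offset_curve a b alpha T V U kg kn tg g y1 y3 s :
  darboux_curve a b alpha T V U kg kn tg -> offset_ode a b kn y1 y3 ->
  (forall t, inI a b t ->
     g t = vadd (alpha t) (vadd (vscal (y1 t) (T t)) (vscal (y3 t) (U t)))) ->
  inI a b s -> Derive_v g s = vscal (y1 s * kg s - y3 s * tg s) (V s).
Proof.
  intros HD Hy Hg Hs. destruct (Hy s Hs) as [H1 H3].
  apply is_derive_v_Derive_v.
  eapply is_derive_v_ext_loc.
  - apply (filter_imp _ _ (fun t Ht => eq_sym (Hg t Ht)) (inI_locally a b s Hs)).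
  - pose proof (is_derive_v_frame_offset _ _ _ _ _ _ _ _ _ _ _ _ _ _ HD Hs H1 H3) as H.
    replace (vscal (y1 s * kg s - y3 s * tg s) (V s)) with
      (vadd (vscal (1 + (kn s * y3 s - 1) - kn s * y3 s) (T s))
         (vadd (vscal (y1 s * kg s - y3 s * tg s) (V s))
            (vscal (y1 s * kn s + - (kn s * y1 s)) (U s)))) by vec_ring.
    exact H.
Qed.

Lemma offset_ode_affine a b kn c4 c5 :
  (forall s, inI a b s -> kn s = 0) -> offset_ode a b kn (fun s => c4 - s) (fun _ => c5).
Proof.
  intros Hkn s Hs. rewrite (Hkn s Hs). split; auto_derive; auto; ring.
Qed.

Lemma offset_ode_rotation a b kn (theta S C : R -> R) c6 c7 :
  (forall s, inI a b s ->
     is_derive theta s (kn s) /\ is_derive S s (sin (theta s)) /\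
     is_derive C s (cos (theta s))) ->
  offset_ode a b kn
    (fun s => - sin (theta s) * (S s - c6) - cos (theta s) * (C s + c7))
    (fun s => c6 * cos (theta s) + c7 * sin (theta s)
              - S s * cos (theta s) + C s * sin (theta s)).
Proof.
  intros Hd s Hs. destruct (Hd s Hs) as (Dth & DS & DC).
  pose proof (sin2_cos2 (theta s)) as Hsc. unfold Rsqr in Hsc.
  split; auto_derive;
    try (repeat split; eexists; eassumption);
    replace (Derive (fun t => theta t) s) with (kn s)
      by (symmetry; now apply is_derive_unique);
    replace (Derive (fun t => S t) s) with (sin (theta s))
      by (symmetry; now apply is_derive_unique);
    replace (Derive (fun t => C t) s) with (cos (theta s))
      by (symmetry; now apply is_derive_unique);
    nra.
Qed.

Lemma vnorm_darboux_V a b alpha T V U kg kn tg s :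
  darboux_curve a b alpha T V U kg kn tg -> inI a b s -> vnorm (V s) = 1.
Proof.
  intros HD Hs. destruct (HD s Hs) as (_ & HT & HU & HTU & HV & _).
  rewrite HV. apply vnorm_cross_orthonormal; [assumption | assumption |].
  rewrite dot_comm. exact HTU.
Qed.

Lemma general_helix_iff_rel_normal_slant_helix_of_offset_ode
    a b alpha T V U kg kn tg g y1 y3 :
  Rbar_lt a b -> darboux_curve a b alpha T V U kg kn tg -> regular a b g ->
  (forall t, inI a b t ->
     g t = vadd (alpha t) (vadd (vscal (y1 t) (T t)) (vscal (y3 t) (U t)))) ->
  offset_ode a b kn y1 y3 ->
  general_helix a b g <-> rel_normal_slant_helix a b V.
Proof.
  intros Hab HD Hr Hg Hy.
  set (f := fun s => y1 s * kg s - y3 s * tg s).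
  assert (Hg' : forall s, inI a b s -> Derive_v g s = vscal (f s) (V s))
    by (intros s Hs; exact (Derive_v_offset_curve _ _ _ _ _ _ _ _ _ _ _ _ s HD Hy Hg Hs)).
  assert (Hf : forall s, inI a b s -> continuous f s /\ f s <> 0).
  { intros s Hs. split.
    - destruct (Hy s Hs) as [H1 H3].
      destruct (HD s Hs) as (_ & _ & _ & _ & _ & _ & _ & _ & Hkg & _ & Htg).
      apply (continuous_minus (fun t => y1 t * kg t) (fun t => y3 t * tg t));
        apply (continuous_mult (K := R_AbsRing)); try assumption;
        apply (ex_derive_continuous (V := R_NormedModule)); eexists; eassumption.
    - intros Hf0. apply (proj2 (Hr s Hs)).
      rewrite Hg', Hf0 by assumption. vec_ring. }
  destruct (inI_nonempty a b Hab) as [s0 Hs0].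
  apply (general_helix_iff_rel_normal_slant_helix_of_unit_tangent a b g V (sign (f s0))).
  - apply Rabs_sign, Hf, Hs0.
  - intros s Hs. pose proof (vnorm_darboux_V _ _ _ _ _ _ _ _ _ s HD Hs) as HV.
    split; [exact HV|].
    rewrite (nonzero_sign_const a b f s0 s Hf Hs0 Hs).
    apply unit_tangent_scal_unit; [exact HV | apply Hf, Hs | apply Hg', Hs].
Qed.

Theorem theorem3p17 (a b : Rbar) (alpha T V U : R -> vec) (kg kn tg : R -> R)
    (gamma : R -> vec) :
  Rbar_lt a b ->
  darboux_curve a b alpha T V U kg kn tg ->
  (case_a a b alpha T U kn gamma \/ case_b a b alpha T U kn gamma) ->
  regular a b gamma ->
  (general_helix a b gamma <-> rel_normal_slant_helix a b V).
Proof.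
  intros Hab HD [[Hkn [c4 [c5 Hg]]] | [_ [theta [S [C [c6 [c7 [Hd Hg]]]]]]]] Hr.
  - apply (general_helix_iff_rel_normal_slant_helix_of_offset_ode
             a b alpha T V U kg kn tg gamma (fun s => c4 - s) (fun _ => c5)); try assumption.
    apply offset_ode_affine, Hkn.
  - apply (general_helix_iff_rel_normal_slant_helix_of_offset_ode
             a b alpha T V U kg kn tg gamma
             (fun s => - sin (theta s) * (S s - c6) - cos (theta s) * (C s + c7))
             (fun s => c6 * cos (theta s) + c7 * sin (theta s)
                       - S s * cos (theta s) + C s * sin (theta s))); try assumption.
    apply offset_ode_rotation, Hd.
Qed.
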